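(* The map $\phi:\mathcal{B}\to\mathrm{GL}(2,\mathbb{Z}[t,t^{-1},(1+t)^{-1}])$ is an injective group homomorphism satisfying $\det\phi(A)=\det A$ for all $A\in\mathcal{B}$.
   Context: For a matrix $A$ with Laurent polynomial entries, $\overline{A}$ denotes the matrix obtained by substituting $t\mapsto t^{-1}$ in every entry. Let $J_3=\begin{pmatrix}1&-t^{-1}&-t^{-1}\\-t&1&-t^{-1}\\-t&-t&1\end{pmatrix}$, $v=(t,t^2,t^3)$ (a row vector) and $\vec{1}=(1,1,1)^T$. The formal Burau group is $\mathcal{B}=\{A\in\mathrm{GL}(3,\mathbb{Z}[t,t^{-1}]) : vA=v,\ A\vec 1=\vec 1,\ \overline{A}J_3A^T=J_3\}$. For $A=(A_{ij})\in\mathcal{B}$ put, for $k=1,2$, $f_{k1}=A_{k1}(1+t+t^2)-1$, $f_{k2}=A_{k1}+A_{k2}(1+t)-1$, and $g_{kl}=f_{kl}/(t(1+t))$. Define $\phi(A)=\begin{pmatrix}g_{11}&g_{12}\\ t^{-1}g_{11}+(1+t)g_{21}& t^{-1}g_{12}+(1+t)g_{22}\end{pmatrix}$. *)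

From HB Require Import structures.
From mathcomp Require Import all_boot all_order all_algebra.
Set Implicit Arguments. Unset Strict Implicit. Unset Printing Implicit Defensive.
Import GRing.Theory.
Local Open Scope ring_scope.
Local Open Scope quotient_scope.
Notation tofrac := (@FracField.tofrac _).
Notation "x %:F" := (@FracField.tofrac _ x) : ring_scope.

(* Ambient field: rational functions K = Frac(Z[t]).  The rings
   Z[t,t^-1] and Z[t,t^-1,(1+t)^-1] are realised as subrings of K. *)
Definition K := {fraction {poly int}}.

Definition tK : K := ('X : {poly int})%:F.

Definition laurent (x : K) : Prop :=
  exists (n : nat) (p : {poly int}), x = p%:F / tK ^+ n.

Definition laurent1t (x : K) : Prop :=
  exists (n m : nat) (p : {poly int}), x = p%:F / (tK ^+ n * (1 + tK) ^+ m).

Definition ev_inv (p : {poly int}) : K :=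
  (map_poly (fun c : int => (c%:P : {poly int})%:F) p).[tK^-1].

Definition bar (x : K) : K :=
  let r := repr x in ev_inv (\n_r) / ev_inv (\d_r).

Definition barmx m n (A : 'M[K]_(m, n)) : 'M[K]_(m, n) := map_mx bar A.

(* GL(n, R) for the subring R given by predicate P: entries in R and
   determinant a unit of R *)
Definition inGL (P : K -> Prop) n (A : 'M[K]_n) : Prop :=
  (forall i j, P (A i j)) /\ \det A != 0 /\ P (\det A)^-1.

Definition J3 : 'M[K]_3 :=
  \matrix_(i < 3, j < 3)
    (if i == j :> nat then 1 else if (i < j)%N then - tK^-1 else - tK).

Definition vrow : 'rV[K]_3 := \row_(j < 3) tK ^+ j.+1.

Definition ones : 'cV[K]_3 := \col_(i < 3) 1.

Definition burau (A : 'M[K]_3) : Prop :=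
  inGL laurent A /\ vrow *m A = vrow /\ A *m ones = ones /\
  barmx A *m J3 *m A^T = J3.

Definition i0 : 'I_3 := @Ordinal 3 0 isT.
Definition i1 : 'I_3 := @Ordinal 3 1 isT.

Definition fk1 (A : 'M[K]_3) (k : 'I_3) : K := A k i0 * (1 + tK + tK ^+ 2) - 1.
Definition fk2 (A : 'M[K]_3) (k : 'I_3) : K := A k i0 + A k i1 * (1 + tK) - 1.
Definition gk1 (A : 'M[K]_3) (k : 'I_3) : K := fk1 A k / (tK * (1 + tK)).
Definition gk2 (A : 'M[K]_3) (k : 'I_3) : K := fk2 A k / (tK * (1 + tK)).

Definition phi (A : 'M[K]_3) : 'M[K]_2 :=
  \matrix_(i < 2, j < 2)
    (if i == 0 :> nat then (if j == 0 :> nat then gk1 A i0 else gk2 A i0)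
     else if j == 0 :> nat then tK^-1 * gk1 A i0 + (1 + tK) * gk1 A i1
          else tK^-1 * gk2 A i0 + (1 + tK) * gk2 A i1).

(* Only the linear conditions vA = v and A1 = 1 matter.  They express the last column and the last row of A through
   its upper-left block (a b; c d), so A is determined by four entries.  In
   these coordinates phi(A) is an explicit rational expression with
   denominator t(1+t), and phi(AB) = phi(A) phi(B), phi(1) = 1 and
   det phi(A) = det A become identities of rational functions, valid in any
   field where t and 1+t are invertible.  For injectivity, the first row of
   phi(A) gives back a and then b, and the second row minus t^-1 times the
   first, divided by 1+t, gives back c and d; solving for a and c divides by
   1+t+t^2.  The only denominators being t and 1+t, phi(A) has entries in
   Z[t,t^-1,(1+t)^-1], and its determinant det A is a unit there. *)

From mathcomp Require Import all_boot all_order all_algebra.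
From mathcomp Require Import ring.
Set Implicit Arguments. Unset Strict Implicit. Unset Printing Implicit Defensive.
Import GRing.Theory.
Local Open Scope ring_scope.

Lemma nat_indexed_mx (R : Type) m n (A : 'M[R]_(m.+1, n.+1)) :
  exists B : nat -> nat -> R, forall i j, A i j = B i j.
Proof. by exists (fun i j => A (inord i) (inord j)) => i j; rewrite !inord_val. Qed.

Lemma det_mx22 (R : comPzRingType) (A : 'M[R]_2) :
  \det A = A 0 0 * A 1 1 - A 0 1 * A 1 0.
Proof.
have [B E] := nat_indexed_mx A.
rewrite (expand_det_row _ 0) !big_ord_recr big_ord0 /= /cofactor !det_mx11 !mxE !E /=.
ring.
Qed.

Lemma det_mx33 (R : comPzRingType) (A : 'M[R]_3) : \det A =
    A 0 0 * (A 1 1 * A 2 2 - A 1 2 * A 2 1)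
  - A 0 1 * (A 1 0 * A 2 2 - A 1 2 * A 2 0)
  + A 0 2 * (A 1 0 * A 2 1 - A 1 1 * A 2 0).
Proof.
have [B E] := nat_indexed_mx A.
rewrite (expand_det_row _ 0) !big_ord_recr big_ord0 /= /cofactor !det_mx22 !mxE !E /=.
ring.
Qed.

Section DenominatorsTOneT.
Variables (F : fieldType) (t : F).
Hypotheses (t_neq0 : t != 0) (t1_neq0 : 1 + t != 0).

Lemma addf_div_tpow (p q : F) n m n' m' :
  p / (t ^+ n * (1 + t) ^+ m) + q / (t ^+ n' * (1 + t) ^+ m') =
  (p * t ^+ n' * (1 + t) ^+ m' + q * t ^+ n * (1 + t) ^+ m) /
  (t ^+ (n + n') * (1 + t) ^+ (m + m')).
Proof. by rewrite !exprD; field; rewrite ?mulf_neq0 ?expf_neq0. Qed.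

Lemma mulf_div_tpow (p q : F) n m n' m' :
  p / (t ^+ n * (1 + t) ^+ m) * (q / (t ^+ n' * (1 + t) ^+ m')) =
  (p * q) / (t ^+ (n + n') * (1 + t) ^+ (m + m')).
Proof. by rewrite !exprD; field; rewrite ?mulf_neq0 ?expf_neq0. Qed.

End DenominatorsTOneT.

Section PhiAt.
Variables (F : fieldType) (t : F).
Hypotheses (t_neq0 : t != 0) (t1_neq0 : 1 + t != 0).

Definition vrow_at : 'rV[F]_3 := \row_(j < 3) t ^+ j.+1.

Definition stabilises (A : 'M[F]_3) : Prop :=
  vrow_at *m A = vrow_at /\ A *m (\col_(i < 3) 1) = \col_(i < 3) 1.

Definition gk1_at (A : 'M[F]_3) (k : 'I_3) : F :=
  (A k i0 * (1 + t + t ^+ 2) - 1) / (t * (1 + t)).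
Definition gk2_at (A : 'M[F]_3) (k : 'I_3) : F :=
  (A k i0 + A k i1 * (1 + t) - 1) / (t * (1 + t)).

Definition phi_at (A : 'M[F]_3) : 'M[F]_2 :=
  \matrix_(i < 2, j < 2)
    (if i == 0 :> nat then (if j == 0 :> nat then gk1_at A i0 else gk2_at A i0)
     else if j == 0 :> nat then t^-1 * gk1_at A i0 + (1 + t) * gk1_at A i1
          else t^-1 * gk2_at A i0 + (1 + t) * gk2_at A i1).

Definition stab_row (a b : F) (j : nat) : F := [:: a; b; 1 - a - b]`_j.

(* The last column is forced by [A *m 1 = 1], the last row by
   [vrow_at *m A = vrow_at]. *)
Definition stab_mx (a b c d : F) : 'M[F]_3 :=
  \matrix_(i < 3, j < 3)
    (if i == 0 :> nat then stab_row a b j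
     else if i == 1 :> nat then stab_row c d j
     else (t ^+ j.+1 - t * stab_row a b j - t ^+ 2 * stab_row c d j) / t ^+ 3).

Lemma stab_mxE (A : 'M[F]_3) :
  stabilises A -> A = stab_mx (A i0 i0) (A i0 i1) (A i1 i0) (A i1 i1).
Proof.
move=> [vA A1]; have [B E] := nat_indexed_mx A.
have row_sum i : (i < 3)%N -> B i 2 = 1 - B i 0 - B i 1.
  move=> lti; have := congr1 (fun M : 'cV_3 => M (Ordinal lti) ord0) A1.
  rewrite !mxE !big_ord_recr big_ord0 /= !mxE !E /= => <-; ring.
have last_row j : (j < 3)%N ->
    B 2 j = (t ^+ j.+1 - t * B 0 j - t ^+ 2 * B 1 j) / t ^+ 3.
  move=> ltj; have := congr1 (fun M : 'rV_3 => M ord0 (Ordinal ltj)) vA.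
  rewrite !mxE !big_ord_recr big_ord0 /= !mxE !E /= => <-.
  by field; rewrite ?expf_neq0.
apply/matrixP => i j; rewrite mxE !E /=.
case: i => [[|[|[|//]]] ?]; case: j => [[|[|[|//]]] ?] //;
  by rewrite ?last_row ?row_sum.
Qed.

Lemma phi_at1 : phi_at 1 = 1.
Proof.
apply/matrixP => i j; rewrite /phi_at /gk1_at /gk2_at !mxE /=.
by case: i => [[|[|//]] ?]; case: j => [[|[|//]] ?] /=; field; rewrite ?t_neq0 ?t1_neq0.
Qed.

Lemma phi_at_stab_mxM a b c d a' b' c' d' :
  phi_at (stab_mx a b c d *m stab_mx a' b' c' d') =
  phi_at (stab_mx a b c d) *m phi_at (stab_mx a' b' c' d').
Proof.
apply/matrixP => i j; rewrite /phi_at /gk1_at /gk2_at.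
rewrite !mxE !big_ord_recr !big_ord0 /= !mxE /= /stab_row /=.
by case: i => [[|[|//]] ?]; case: j => [[|[|//]] ?] /=;
  field; rewrite ?t_neq0 ?t1_neq0 ?expf_neq0.
Qed.

Lemma phi_atM (A B : 'M[F]_3) : stabilises A -> stabilises B ->
  phi_at (A *m B) = phi_at A *m phi_at B.
Proof. by move=> /stab_mxE -> /stab_mxE ->; apply: phi_at_stab_mxM. Qed.

Lemma det_phi_at (A : 'M[F]_3) : stabilises A -> \det (phi_at A) = \det A.
Proof.
move=> /stab_mxE ->; move: (A i0 i0) (A i0 i1) (A i1 i0) (A i1 i1) => a b c d.
rewrite det_mx22 det_mx33 /phi_at /gk1_at /gk2_at !mxE /= /stab_row /=.
by field; rewrite ?t_neq0 ?t1_neq0 ?expf_neq0.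
Qed.

Hypothesis t2_neq0 : 1 + t + t ^+ 2 != 0.

Lemma gk_at_inj (A B : 'M[F]_3) k :
  gk1_at A k = gk1_at B k -> gk2_at A k = gk2_at B k ->
  A k i0 = B k i0 /\ A k i1 = B k i1.
Proof.
have u_neq0 : (t * (1 + t))^-1 != 0 by rewrite invr_eq0 mulf_neq0.
rewrite /gk1_at /gk2_at => /(mulIf u_neq0)/addIr/(mulIf t2_neq0) e0.
by move=> /(mulIf u_neq0)/addIr; rewrite e0 => /addrI/(mulIf t1_neq0).
Qed.

Lemma phi_at_inj (A B : 'M[F]_3) : stabilises A -> stabilises B ->
  phi_at A = phi_at B -> A = B.
Proof.
move=> sA sB eAB; have e i j := congr1 (fun M : 'M_2 => M i j) eAB.
move: (e 0 0) (e 0 1) (e 1 0) (e 1 1); rewrite !mxE /= => g1 g2 h1 h2.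
have [e00 e01] := gk_at_inj g1 g2.
move: h1 h2; rewrite g1 g2 => /addrI/(mulfI t1_neq0) h1 /addrI/(mulfI t1_neq0) h2.
have [e10 e11] := gk_at_inj h1 h2.
by rewrite (stab_mxE sA) (stab_mxE sB) e00 e01 e10 e11.
Qed.

End PhiAt.

Lemma tK_neq0 : tK != 0.
Proof. by rewrite tofrac_eq0 polyX_eq0. Qed.

Lemma tK1_neq0 : 1 + tK != 0.
Proof.
rewrite -tofrac1 -tofracD tofrac_eq0; apply/eqP => /(congr1 (horner^~ 0)).
by rewrite !hornerE.
Qed.

Lemma tK2_neq0 : 1 + tK + tK ^+ 2 != 0.
Proof.
rewrite -tofrac1 -tofracXn -!tofracD tofrac_eq0; apply/eqP => /(congr1 (horner^~ 0)).
by rewrite !hornerE.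
Qed.

Lemma burau_stabilises (A : 'M[K]_3) : burau A -> stabilises tK A.
Proof. by case=> _ [vA [A1 _]]. Qed.

Lemma laurent1t_add x y : laurent1t x -> laurent1t y -> laurent1t (x + y).
Proof.
move=> [n [m [p ->]]] [n' [m' [q ->]]].
exists (n + n')%N, (m + m')%N, (p * 'X^n' * (1 + 'X) ^+ m' + q * 'X^n * (1 + 'X) ^+ m).
rewrite rmorphD !rmorphM !rmorphXn rmorphD rmorph1.
exact: (addf_div_tpow tK_neq0 tK1_neq0 p%:F q%:F n m n' m').
Qed.

Lemma laurent1t_mul x y : laurent1t x -> laurent1t y -> laurent1t (x * y).
Proof.
move=> [n [m [p ->]]] [n' [m' [q ->]]].
exists (n + n')%N, (m + m')%N, (p * q); rewrite rmorphM.
exact: (mulf_div_tpow tK_neq0 tK1_neq0 p%:F q%:F n m n' m').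
Qed.

Lemma laurent1t_opp x : laurent1t x -> laurent1t (- x).
Proof. by move=> [n [m [p ->]]]; exists n, m, (- p); rewrite rmorphN mulNr. Qed.

Lemma laurent1t1 : laurent1t 1.
Proof. by exists 0%N, 0%N, 1; rewrite rmorph1 !expr0 mulr1 divr1. Qed.

Lemma laurent1t_tK : laurent1t tK.
Proof. by exists 0%N, 0%N, 'X; rewrite !expr0 mulr1 divr1. Qed.

Lemma laurent1t_tKV : laurent1t tK^-1.
Proof. by exists 1%N, 0%N, 1; rewrite rmorph1 expr0 expr1 mulr1 mul1r. Qed.

Lemma laurent1t_1tKV : laurent1t (1 + tK)^-1.
Proof. by exists 0%N, 1%N, 1; rewrite rmorph1 expr0 expr1 mul1r mul1r. Qed.

Lemma laurent_laurent1t x : laurent x -> laurent1t x.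
Proof. by move=> [n [p ->]]; exists n, 0%N, p; rewrite expr0 mulr1. Qed.

Lemma laurent1t_exp x k : laurent1t x -> laurent1t (x ^+ k).
Proof.
by move=> lx; elim: k => [|k IHk]; rewrite ?expr0 ?exprS; [exact: laurent1t1 | exact: laurent1t_mul].
Qed.

Ltac laurent1t_closure := repeat match goal with
  | |- laurent1t (_ + _) => apply: laurent1t_add
  | |- laurent1t (_ * _) => apply: laurent1t_mul
  | |- laurent1t (- _) => apply: laurent1t_opp
  | |- laurent1t (_ ^+ _) => apply: laurent1t_exp
  | |- laurent1t (_ * _)^-1 => rewrite invfM
  | |- laurent1t tK^-1 => exact: laurent1t_tKV
  | |- laurent1t (1 + tK)^-1 => exact: laurent1t_1tKV
  | |- laurent1t 1 => exact: laurent1t1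
  | |- laurent1t tK => exact: laurent1t_tK
  | |- laurent1t _ => apply: laurent_laurent1t
  end.

Lemma phi_inGL (A : 'M[K]_3) : burau A -> inGL laurent1t (phi A).
Proof.
move=> bA; have detE := det_phi_at tK_neq0 tK1_neq0 (burau_stabilises bA).
case: bA => [[lA [detA_neq0 ldetAV]] _].
split; last by rewrite detE; split; last exact: laurent_laurent1t.
move=> i j; rewrite mxE /gk1 /gk2 /fk1 /fk2.
by case: ifP => _; case: ifP => _; laurent1t_closure; apply: lA.
Qed.

Theorem lemma3p4 :
  (forall A : 'M[K]_3, burau A -> inGL laurent1t (phi A)) /\
  phi 1 = 1 /\
  (forall A B : 'M[K]_3, burau A -> burau B -> phi (A *m B) = phi A *m phi B) /\
  (forall A B : 'M[K]_3, burau A -> burau B -> phi A = phi B -> A = B) /\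
  (forall A : 'M[K]_3, burau A -> \det (phi A) = \det A).
Proof.
have phiE A : phi A = phi_at tK A by [].
split; first exact: phi_inGL.
split; first by rewrite phiE (phi_at1 tK_neq0 tK1_neq0).
split.
  move=> A B /burau_stabilises sA /burau_stabilises sB.
  by rewrite !phiE (phi_atM tK_neq0 tK1_neq0 sA sB).
split.
  move=> A B /burau_stabilises sA /burau_stabilises sB.
  by rewrite !phiE; apply: (phi_at_inj tK_neq0 tK1_neq0 tK2_neq0 sA sB).
by move=> A /burau_stabilises sA; rewrite phiE (det_phi_at tK_neq0 tK1_neq0 sA).
Qed.
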